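(* Let $\theta>0$ and $\ell\in[m]$. Consider an instance of stochastic $\mathrm{Top}_\ell$-norm load balancing on $m$ identical machines with independent nonnegative job random variables $\{X_j\}_{j\in J}$, where for each job $j$ the distribution of $X_j$ is supported on $\{0\}\cup[\theta,\infty)$, i.e. $\Pr[0<X_j<\theta]=0$. (i) If $\sum_{j\in J}\mathbb{E}[X_j]\le\ell\theta$, then for any assignment $\sigma$, $\mathbb{E}[\mathrm{Top}_\ell(\mathcal{L}^\sigma)]\le2\ell\theta$. (ii) If $\sum_{j\in J}\mathbb{E}[X_j]>\ell\theta$, then for any assignment $\sigma$, $\mathbb{E}[\mathrm{Top}_\ell(\mathcal{L}^\sigma)]>\ell\theta/2$.
   Context: An assignment $\sigma:J\to[m]$ induces the random load vector $\mathcal{L}^\sigma$ with $\mathcal{L}^\sigma_i=\sum_{j:\sigma(j)=i}X_j$. For $x\in\mathbb{R}^m_{\ge0}$, $\mathrm{Top}_\ell(x)$ is the sum of the $\ell$ largest coordinates of $x$. *)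

From HB Require Import structures.
From mathcomp Require Import all_boot all_order all_algebra.
From mathcomp Require Import all_classical all_reals all_analysis.
Set Implicit Arguments. Unset Strict Implicit. Unset Printing Implicit Defensive.
Import Order.TTheory GRing.Theory Num.Theory.
Local Open Scope classical_set_scope.
Local Open Scope ring_scope.

Definition mutually_independent d (T : measurableType d) (R : realType)
    (P : probability T R) (J : finType) (X : J -> {RV P >-> R}) : Prop :=
  forall (S : {set J}) (B : J -> set R),
    (forall j, measurable (B j)) ->
    P (\bigcap_(j in [set j | j \in S]) (X j @^-1` B j)) =
      (\prod_(j in S) P (X j @^-1` B j))%E.

Definition Top (R : realType) (m l : nat) (x : 'I_m -> R) : R :=
  \sum_(v <- take l (sort (fun a b : R => b <= a) [seq x i | i <- enum 'I_m])) v.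

Definition load d (T : measurableType d) (R : realType) (P : probability T R)
    (J : finType) (m : nat) (X : J -> {RV P >-> R}) (sigma : J -> 'I_m)
    (t : T) : 'I_m -> R :=
  fun i => \sum_(j | sigma j == i) X j t.

(* (i) Top_l of the loads never exceeds the total load, whose expectation is at most l theta.
   (ii) Call job j big at t when X_j t >= theta; almost surely every job is big or zero. If at
   least l jobs are big, the machines carrying l of them have total load at least l theta.
   Otherwise, a job j contributes its full size to Top_l as soon as fewer than l of the other
   jobs are big; that event depends only on the other jobs, so by independence
   E[X_j; fewer than l others big] = E[X_j] P(fewer than l others big) >= E[X_j] P(fewer than
   l big). Hence E[Top_l] >= max(l theta P(>= l big), (sum_j E[X_j]) P(< l big)), and one of
   the two complementary probabilities is at least 1/2. *)

From HB Require Import structures.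
From mathcomp Require Import all_boot all_order all_algebra.
From mathcomp Require Import all_classical all_reals all_analysis.
From mathcomp Require Import measurable_realfun lra.
Import Order.TTheory GRing.Theory Num.Theory.
Local Open Scope classical_set_scope.
Local Open Scope ring_scope.

Lemma half_lt_of_split {R : realType} {c : R} {s e a b : \bar R} : 0 < c ->
  (c%:E < s)%E -> (0 <= a)%E -> (0 <= b)%E -> (a + b = 1)%E ->
  (c%:E * a <= e)%E -> (s * b <= e)%E -> ((c / 2)%:E < e)%E.
Proof.
move=> c_gt0 c_lt_s; case: a b => [a| |] [b| |] //= a_ge0 b_ge0 //.
- move=> /eqP; rewrite -EFinD eqe => /eqP ab1; rewrite -EFinM => ca_le sb_le.
  rewrite lee_fin in a_ge0 b_ge0.
  have [a_gt|a_le] := ltrP (1 / 2) a.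
    by apply: lt_le_trans ca_le; rewrite lte_fin; nra.
  apply: le_lt_trans (_ : (c * b)%:E < e)%E; first by rewrite lee_fin; nra.
  apply: lt_le_trans sb_le; rewrite EFinM lte_pmul2r // lte_fin; lra.
Qed.

(* [Top l (load X sigma)] is never shown measurable; the integral of a nonnegative function
   is a supremum over the simple functions below it, hence monotone regardless. *)
Lemma ge0_le_integral_nomeas d (T : measurableType d) (R : realType)
    (mu : {measure set T -> \bar R}) (f g : T -> \bar R) :
  (forall t, 0 <= f t)%E -> (forall t, f t <= g t)%E ->
  (\int[mu]_t f t <= \int[mu]_t g t)%E.
Proof.
move=> f_ge0 fg; have g_ge0 t : (0 <= g t)%E by apply: le_trans (fg t).
rewrite !ge0_integralTE //; apply: ereal_sup_le => _ [h hf <-].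
by exists h => //= t; apply: le_trans (fg t).
Qed.

Section Top.
Context {R : realType}.

Local Notation sort_desc := (sort (fun a b : R => b <= a)).

Lemma sum_sort_desc m (f : R -> R) (x : 'I_m -> R) :
  \sum_(v <- sort_desc [seq x i | i <- enum 'I_m]) f v = \sum_i f (x i).
Proof. by rewrite (perm_big _ (permEl (perm_sort _ _))) big_map big_enum. Qed.

Lemma Top_le_sum m l (x : 'I_m -> R) :
  (forall i, 0 <= x i) -> Top l x <= \sum_i x i.
Proof.
move=> x_ge0; rewrite /Top -(sum_sort_desc _ id).
set s := sort_desc _; rewrite -{2}(cat_take_drop l s) big_cat lerDl.
rewrite big_seq sumr_ge0 // => v /mem_drop; rewrite mem_sort => /mapP[i _ ->].
exact: x_ge0.
Qed.

Lemma Top_threshold {m l} (x : 'I_m -> R) : (0 < l <= m)%N ->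
  exists c : 'I_m, Top l x = l%:R * x c + \sum_i Num.max (x i - x c) 0.
Proof.
case/andP=> l_gt0 l_le_m; rewrite /Top; set s := sort_desc _.
have s_sorted : sorted (fun a b : R => b <= a) s by apply: sort_sorted => a b; apply: le_total.
have size_s : size s = m by rewrite size_sort size_map size_enum_ord.
have l1_lt : (l.-1 < size s)%N by rewrite size_s prednK.
set c := nth 0 s l.-1.
have /mapP[i0 _ c_def] : c \in [seq x i | i <- enum 'I_m].
  by rewrite -(mem_sort (fun a b : R => b <= a)) mem_nth.
exists i0; rewrite -c_def.
have le_nth i j : (i <= j < size s)%N -> nth 0 s j <= nth 0 s i.
  case/andP=> ij js; apply: (sorted_leq_nth ge_trans) => //.
    by move=> ?; apply: lexx.
  by rewrite inE (leq_ltn_trans ij).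
have take_ge : \sum_(v <- take l s) Num.max (v - c) 0 = \sum_(v <- take l s) (v - c).
  rewrite !big_seq; apply: eq_bigr => v /(nthP 0)[i].
  rewrite size_takel ?size_s // => il <-; apply/max_idPl.
  by rewrite subr_ge0 nth_take // le_nth // l1_lt andbT -ltnS prednK.
have drop_le : \sum_(v <- drop l s) Num.max (v - c) 0 = 0.
  rewrite big_seq big1 // => v /(nthP 0)[i]; rewrite size_drop ltn_subRL => il <-.
  apply/max_idPr; rewrite subr_le0 nth_drop le_nth // il.
  by rewrite (leq_trans (leq_pred l)) ?leq_addr.
rewrite -(sum_sort_desc _ (fun v => Num.max (v - c) 0)) -/s.
rewrite -{2}(cat_take_drop l s) big_cat /= drop_le addr0 take_ge sumrB.
rewrite big_const_seq count_predT size_takel ?size_s //.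
by rewrite iter_addr addr0 mulr_natl addrC subrK.
Qed.

Lemma sum_le_Top {m l} {x : 'I_m -> R} (A : {set 'I_m}) :
  (forall i, 0 <= x i) -> (0 < l <= m)%N -> (#|A| <= l)%N ->
  \sum_(i in A) x i <= Top l x.
Proof.
move=> x_ge0 l_range A_le_l; have [c ->] := Top_threshold x l_range.
apply: (@le_trans _ _ (\sum_(i in A) (x c + Num.max (x i - x c) 0))).
  by apply: ler_sum => i _; rewrite -lerBlDl le_max lexx.
rewrite big_split sumr_const /= lerD //.
  by rewrite -[x c *+ _]mulr_natl ler_wpM2r ?ler_nat.
rewrite [X in _ <= X](bigID (mem A)) /= lerDl sumr_ge0 // => i _.
by rewrite le_max lexx orbT.
Qed.
End Top.

Definition cutoff {R : realType} (theta x : R) : R := x * (theta <= x)%R%:R.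

Lemma cutoff_ge0 {R : realType} (theta x : R) : 0 <= theta -> 0 <= cutoff theta x.
Proof.
move=> theta_ge0; rewrite /cutoff.
by have [/(le_trans theta_ge0)|] := lerP theta x; rewrite ?mulr1 ?mulr0.
Qed.

Lemma measurable_cutoff {R : realType} (theta : R) : measurable_fun setT (cutoff theta).
Proof.
have -> : cutoff theta = (fun x => x * \1_(`[theta, +oo[%classic) x).
  by apply/funext => x; rewrite /cutoff indicE mem_setE in_itv /= andbT.
by apply: measurable_funM => //; exact: measurable_indic.
Qed.

Section Load.
Context {R : realType} {J : finType} {m l : nat} (x : J -> R) (sigma : J -> 'I_m).
Hypotheses (x_ge0 : forall j, 0 <= x j) (l_range : (0 < l <= m)%N).

Let L (i : 'I_m) := \sum_(j | sigma j == i) x j.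

Let L_ge0 i : 0 <= L i. Proof. exact: sumr_ge0. Qed.

Lemma Top_load_le_sum : Top l L <= \sum_j x j.
Proof. by rewrite (partition_big sigma xpredT) //; apply: Top_le_sum. Qed.

Lemma sum_le_Top_load (B : {set J}) : (#|B| <= l)%N -> \sum_(j in B) x j <= Top l L.
Proof.
move=> B_le_l; apply: le_trans (sum_le_Top (sigma @: B) L_ge0 l_range _); last first.
  exact: leq_trans (leq_imset_card _ _) B_le_l.
rewrite (partition_big sigma (mem (sigma @: B))) => [|j jB]; last exact: imset_f.
apply: ler_sum => i _; rewrite [X in _ <= X]big_mkcond [X in X <= _]big_mkcond.
by apply: ler_sum => j _; case: (sigma j == i); case: (j \in B); rewrite ?andbT ?andbF.
Qed.

Lemma Top_load_ge0 : 0 <= Top l L.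
Proof. by have := sum_le_Top_load finset.set0; rewrite cards0 big_set0; apply. Qed.

Variable theta : R.
Let big : {set J} := [set j | theta <= x j].

Lemma Top_load_ge_many : (l <= #|big|)%N -> l%:R * theta <= Top l L.
Proof.
case/card_geqP=> [s [s_uniq size_s s_big]].
apply: le_trans (sum_le_Top_load [set j in s] _); last first.
  by rewrite cardsE (card_uniqP s_uniq) size_s.
rewrite -size_s -(card_uniqP s_uniq) -cardsE -sum1_card natr_sum mulr_suml.
by apply: ler_sum => j; rewrite inE => /s_big; rewrite inE mul1r.
Qed.

Lemma Top_load_ge_few :
  \sum_j cutoff theta (x j) * (#|~: [set j] :&: big| < l)%N%:R <= Top l L.
Proof.
have [big_le_l | l_lt_big] := leqP #|big| l.
  apply: le_trans (sum_le_Top_load _ big_le_l).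
  rewrite [X in _ <= X]big_mkcond; apply: ler_sum => j _; rewrite /cutoff inE.
  by case: (theta <= x j); case: (_ < l)%N; rewrite ?mulr1 ?mulr0.
rewrite big1 ?Top_load_ge0 // => j _; rewrite /cutoff.
have [j_big|] := boolP (theta <= x j); last by rewrite mulr0 mul0r.
suff /negbTE-> : ~~ (#|~: [set j] :&: big| < l)%N by rewrite mulr0.
by move: l_lt_big; rewrite -leqNgt (cardsD1 j) inE j_big add1n ltnS finset.setDE finset.setIC.
Qed.
End Load.

Section Independence.
Local Open Scope ereal_scope.
Context {d : measure_display} {T : measurableType d} {R : realType}
  {P : probability T R} {J : finType} (X : J -> {RV P >-> R}).
Hypothesis X_indep : mutually_independent X.
Implicit Types (S Z : {set J}) (B : J -> set R).

Definition cylinder (S : {set J}) (B : J -> set R) : set T :=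
  \bigcap_(k in [set k | k \in S]) X k @^-1` B k.

Lemma measurable_cylinder S B : (forall k, measurable (B k)) -> measurable (cylinder S B).
Proof.
move=> mB; apply: fin_bigcap_measurable => [|k _]; first exact: finite_finset.
by rewrite -[X in measurable X]setTI; apply: measurable_funPT.
Qed.

Lemma indep_preimage_cylinder j S B (A : set R) : j \notin S ->
  (forall k, measurable (B k)) -> measurable A ->
  P (X j @^-1` A `&` cylinder S B) = P (X j @^-1` A) * P (cylinder S B).
Proof.
move=> jS mB mA; pose BA k := if k == j then A else B k.
have BA_S k : k \in S -> BA k = B k by rewrite /BA; case: eqP => // ->; rewrite (negbTE jS).
have mBA k : measurable (BA k) by rewrite /BA; case: eqP.
have -> : X j @^-1` A `&` cylinder S B = cylinder (j |: S) BA.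
  apply/seteqP; split => [t [XjA St] k /=|t St].
    by case/setU1P=> [->|kS]; [rewrite /BA eqxx | rewrite BA_S //; apply: St].
  split=> [|k /= kS]; first by have := St j (setU11 _ _); rewrite /= /BA eqxx.
  by rewrite -BA_S //; apply: St; rewrite /= setU1r.
rewrite /cylinder !X_indep // big_setU1 //= /BA eqxx; congr (_ * _).
by apply: eq_bigr => k kS; rewrite -/(BA k) BA_S.
Qed.

Lemma integral_indep_cylinder j S B (h : R -> R) : j \notin S ->
  (forall k, measurable (B k)) -> measurable_fun setT h -> (forall x, 0 <= h x)%R ->
  \int[P]_t (h (X j t) * \1_(cylinder S B) t)%:E =
    \int[P]_t (h (X j t))%:E * P (cylinder S B).
Proof.
move=> jS mB mh h_ge0; set E := cylinder S B.
have mE : measurable E by exact: measurable_cylinder.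
have mhE : measurable_fun setT (fun y => (h y)%:E) by exact: measurableT_comp.
have mhX : measurable_fun setT (fun t => (h (X j t))%:E).
  exact: measurableT_comp mhE (measurable_funPT (X j)).
have PE_ge0 : (0 <= fine (P E))%R by apply: fine_ge0.
have PE_fin : (fine (P E))%:E = P E by rewrite fineK ?fin_num_measure.
have restr_E : \int[P]_t (h (X j t) * \1_E t)%:E = \int[mrestr P mE]_t (h (X j t))%:E.
  transitivity (\int[mrestr P mE]_(t in E) (h (X j t))%:E).
    rewrite [RHS](eq_measure_integral P) => [|A _ AE]; last by rewrite /= /mrestr (setIidl AE).
    rewrite integral_mkcond; apply: eq_integral => t _; rewrite patchE indicE.
    by case: (t \in E); rewrite ?mulr1 ?mulr0.
  rewrite [RHS](ge0_negligible_integral (measurableC mE) measurableT) ?setTD ?setCK //.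
  - by move=> t _; rewrite lee_fin.
  - by rewrite /= /mrestr setICl measure0.
have law_restr A : measurable A ->
    pushforward (mrestr P mE) (X j) A = mscale (NngNum PE_ge0) (distribution P (X j)) A.
  move=> mA; rewrite /= /mscale /= /pushforward /mrestr.
  by rewrite indep_preimage_cylinder // PE_fin muleC.
have hE_ge0 : {in setT, forall y, 0 <= (h y)%:E} by move=> y _; rewrite lee_fin.
have := ge0_integral_pushforward (measurable_funPT (X j)) (mrestr P mE) measurableT mhE hE_ge0.
rewrite restr_E preimage_setT => <-.
rewrite (eq_measure_integral (mscale (NngNum PE_ge0) (distribution P (X j)))) => [|A mA _].
  rewrite ge0_integral_mscale //= ?ge0_integral_distribution // => [|y _].
    by rewrite PE_fin muleC.
  by rewrite lee_fin.
exact: law_restr.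
Qed.

Variable theta : R.

Definition big t : {set J} := [set k | (theta <= X k t)%R].

Let side Z k : set R :=
  if k \in Z then `[theta, +oo[%classic else ~` `[theta, +oo[%classic.

Let measurable_side Z k : measurable (side Z k).
Proof. by rewrite /side; case: ifP => _; [|apply: measurableC]; apply: measurable_itv. Qed.

Definition pattern S Z : set T := cylinder S (side Z).

Lemma measurable_pattern S Z : measurable (pattern S Z).
Proof. exact: measurable_cylinder. Qed.

Lemma mem_pattern S Z t : Z \subset S -> (t \in pattern S Z) = (Z == S :&: big t).
Proof.
move=> ZS; apply/idP/eqP => [|->].
  rewrite in_setE => tZ; apply/setP => k; rewrite !inE.
  have [kS|kNS] := boolP (k \in S); last by apply: contraNF kNS; exact: (fintype.subsetP ZS).
  have := tZ k kS; rewrite /side; case: (k \in Z) => /=; rewrite in_itv /= andbT //.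
  by move/negP/negbTE.
rewrite in_setE => k /= kS; rewrite /side !inE kS /=.
by case: ifP => /= big_k; rewrite in_itv /= andbT ?big_k // => /negP; rewrite big_k.
Qed.

Lemma indic_bigE S (Q : pred {set J}) t :
  ((Q (S :&: big t))%:R = \sum_(Z : {set J} | (Z \subset S) && Q Z) \1_(pattern S Z) t :> R)%R.
Proof.
under eq_bigr => Z /andP[ZS _] do rewrite indicE (mem_pattern _ _ _ ZS).
have [QSt|QNSt] := boolP (Q (S :&: big t)).
  rewrite (bigD1 (S :&: big t)) /= ?subsetIl ?QSt // eqxx big1 ?addr0 // => Z /andP[_].
  by move/negbTE->.
by rewrite big1 // => Z /andP[_ QZ]; case: eqP => // ZE; move: QNSt; rewrite -ZE QZ.
Qed.

Lemma measurable_indic_big S (Q : pred {set J}) :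
  measurable_fun setT (fun t => (Q (S :&: big t))%:R : R).
Proof.
rewrite (funext (indic_bigE S Q)); under eq_fun do rewrite -big_filter.
by apply: measurable_sum => Z; apply/measurable_indic/measurable_pattern.
Qed.

Lemma integral_indic_big S (Q : pred {set J}) :
  \int[P]_t ((Q (S :&: big t))%:R)%:E =
    \sum_(Z : {set J} | (Z \subset S) && Q Z) P (pattern S Z).
Proof.
under eq_integral do rewrite indic_bigE -sumEFin -big_filter.
rewrite ge0_integral_sum //.
  rewrite big_filter; apply: eq_bigr => Z _.
  by rewrite integral_indic ?setIT //; apply: measurable_pattern.
by move=> Z; apply/measurable_EFinP/measurable_indic/measurable_pattern.
Qed.

Lemma integral_indep_big j S (Q : pred {set J}) (h : R -> R) : j \notin S ->
  measurable_fun setT h -> (forall x, 0 <= h x)%R ->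
  \int[P]_t (h (X j t) * (Q (S :&: big t))%:R)%:E =
    \int[P]_t (h (X j t))%:E * \int[P]_t ((Q (S :&: big t))%:R)%:E.
Proof.
move=> jS mh h_ge0; rewrite integral_indic_big ge0_sume_distrr => [|Z _]; last first.
  exact: measure_ge0.
under eq_integral do rewrite indic_bigE mulr_sumr -sumEFin -big_filter.
rewrite ge0_integral_sum //; last 2 first.
- move=> Z; apply/measurable_EFinP/measurable_funM/measurable_indic/measurable_pattern.
  exact: measurableT_comp mh (measurable_funPT (X j)).
- by move=> Z t _; rewrite lee_fin mulr_ge0.
rewrite big_filter; apply: eq_bigr => Z _.
exact: integral_indep_cylinder.
Qed.
End Independence.

Section Expectations.
Local Open Scope ereal_scope.
Context {d : measure_display} {T : measurableType d} {R : realType}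
  {P : probability T R} {J : finType} (X : J -> {RV P >-> R}) (theta : R) {m l : nat}.
Hypotheses (X_ge0 : forall j t, (0 <= X j t)%R) (l_range : (0 < l <= m)%N).
Variable sigma : J -> 'I_m.

Let top_load t := Top l (load X sigma t).

Let measurable_EFin_X j : measurable_fun setT (fun t => (X j t)%:E).
Proof. exact/measurable_EFinP/measurable_funPT. Qed.

Let measurable_EFin_indic_big (Q : pred {set J}) :
  measurable_fun setT (fun t => ((Q (big X theta t))%:R : R)%:E).
Proof.
apply/measurable_EFinP; have := measurable_indic_big X theta [set: J] Q.
by under eq_fun do rewrite finset.setTI.
Qed.

Lemma expectation_Top_load_le_sum : 'E_P[top_load] <= \sum_j 'E_P[X j].
Proof.
rewrite expectation.unlock; apply: le_trans (_ : _ <= \int[P]_t (\sum_j X j t)%:E) _.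
  apply: ge0_le_integral_nomeas => t; rewrite lee_fin.
    exact: Top_load_ge0.
  exact: Top_load_le_sum.
under eq_integral do rewrite -sumEFin.
by rewrite ge0_integral_sum // => j t _; rewrite lee_fin.
Qed.

Lemma expectation_Top_load_ge_many : (0 <= theta)%R ->
  (l%:R * theta)%:E * 'E_P[fun t => (l <= #|big X theta t|)%:R] <= 'E_P[top_load].
Proof.
move=> theta_ge0; have lth_ge0 : (0 <= l%:R * theta)%R by rewrite mulr_ge0.
rewrite expectation.unlock -ge0_integralZl_EFin //; last first.
  exact: (measurable_EFin_indic_big (fun Z => l <= #|Z|)%N).
apply: ge0_le_integral_nomeas => t; rewrite -EFinM lee_fin ?mulr_ge0 //.
have [many|_] := leqP l; rewrite ?mulr1 ?mulr0; last exact: Top_load_ge0.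
exact: Top_load_ge_many.
Qed.

Lemma expectation_cutoff j : P [set t | (0 < X j t < theta)%R] = 0 ->
  'E_P[fun t => cutoff theta (X j t)] = 'E_P[X j].
Proof.
move=> gap_null; rewrite !expectation.unlock; apply: ae_eq_integral => //.
  exact/measurable_EFinP/(measurableT_comp (measurable_cutoff theta))/measurable_funPT.
exists [set t | (0 < X j t < theta)%R]; split => //.
  have -> : [set t | (0 < X j t < theta)%R] = X j @^-1` `]0%R, theta[%classic.
    by apply/seteqP; split => t /=; rewrite in_itv.
  by rewrite -[X in measurable X]setTI; apply: measurable_funPT => //; exact: measurable_itv.
move=> t /= /not_implyP[_]; apply: contra_notP => not_gap.
rewrite /cutoff; have [//|lt_theta] := lerP theta (X j t); rewrite ?mulr1 ?mulr0 //.
have := X_ge0 j t; rewrite le_eqVlt => /predU1P[<- //|X_gt0].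
by case: not_gap; rewrite X_gt0 lt_theta.
Qed.

Lemma expectation_many_add_few :
  'E_P[fun t => (l <= #|big X theta t|)%:R] + 'E_P[fun t => (#|big X theta t| < l)%:R] = 1.
Proof.
rewrite !expectation.unlock -ge0_integralD //; last 2 first.
- exact: (measurable_EFin_indic_big (fun Z => l <= #|Z|)%N).
- exact: (measurable_EFin_indic_big (fun Z => #|Z| < l)%N).
have split_one n : ((l <= n)%N%:R + (n < l)%N%:R = 1 :> R)%R.
  by case: leqP; rewrite ?addr0 ?add0r.
under eq_integral do rewrite -EFinD split_one.
by rewrite integral_cst //= probability_setT mul1e.
Qed.

Hypothesis X_indep : mutually_independent X.

Lemma expectation_Top_load_ge_few : (0 <= theta)%R ->
  (forall j, P [set t | (0 < X j t < theta)%R] = 0) ->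
  (\sum_j 'E_P[X j]) * 'E_P[fun t => (#|big X theta t| < l)%:R] <= 'E_P[top_load].
Proof.
move=> theta_ge0 gap_null.
pose others_few j t : R := (#|~: [set j] :&: big X theta t| < l)%:R.
have few_le j : 'E_P[X j] * 'E_P[fun t => (#|big X theta t| < l)%:R] <=
    'E_P[fun t => (cutoff theta (X j t) * others_few j t)%R].
  rewrite -expectation_cutoff // !expectation.unlock /others_few.
  rewrite (integral_indep_big X X_indep theta j _ (fun Z => #|Z| < l)%N) ?inE ?eqxx //.
  - apply: lee_wpmul2l; first by apply: integral_ge0 => t _; rewrite lee_fin cutoff_ge0.
    apply: ge0_le_integral_nomeas => t; rewrite lee_fin //.
    case: ltnP => // few; rewrite (leq_ltn_trans _ few) //.
    by rewrite subset_leq_card // finset.subsetIr.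
  - exact: measurable_cutoff.
  - by move=> x; apply: cutoff_ge0.
rewrite ge0_sume_distrl => [|j _]; last first.
  by rewrite expectation.unlock integral_ge0 // => t _; rewrite lee_fin.
apply: le_trans; first by apply: lee_sum => j _; exact: few_le.
have -> : \sum_j 'E_P[fun t => (cutoff theta (X j t) * others_few j t)%R] =
    \int[P]_t (\sum_j cutoff theta (X j t) * others_few j t)%R%:E.
  rewrite expectation.unlock; under eq_integral do rewrite -sumEFin.
  rewrite ge0_integral_sum // => [j|j t _]; last by rewrite lee_fin mulr_ge0 ?cutoff_ge0.
  apply/measurable_EFinP/measurable_funM.
    exact/(measurableT_comp (measurable_cutoff theta))/measurable_funPT.
  exact: (measurable_indic_big X theta (~: [set j]) (fun Z => #|Z| < l)%N).
rewrite expectation.unlock; apply: ge0_le_integral_nomeas => t; rewrite lee_fin.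
  by apply: sumr_ge0 => j _; rewrite mulr_ge0 ?cutoff_ge0.
exact: Top_load_ge_few.
Qed.

End Expectations.

Theorem lemma11 (d : measure_display) (T : measurableType d) (R : realType)
  (P : probability T R) (J : finType) (m l : nat) (theta : R)
  (X : J -> {RV P >-> R}) :
  0 < theta ->
  (1 <= l <= m)%N ->
  mutually_independent X ->
  (forall j t, 0 <= X j t) ->
  (forall j, P [set t | 0 < X j t < theta] = 0%E) ->
  ((\sum_(j : J) 'E_P[X j] <= (l%:R * theta)%:E)%E ->
     forall sigma : J -> 'I_m,
       ('E_P[fun t => Top l (load X sigma t)] <= (2 * l%:R * theta)%:E)%E)
  /\
  (((l%:R * theta)%:E < \sum_(j : J) 'E_P[X j])%E ->
     forall sigma : J -> 'I_m,
       ((l%:R * theta / 2)%:E < 'E_P[fun t => Top l (load X sigma t)])%E).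
Proof.
move=> theta_gt0 l_range X_indep X_ge0 gap_null; have theta_ge0 := ltW theta_gt0.
split=> [sum_le|sum_gt] sigma.
  apply: le_trans (expectation_Top_load_le_sum X X_ge0 l_range sigma) _.
  apply: le_trans sum_le _; rewrite lee_fin -mulrA ler_peMl ?mulr_ge0 //.
  by rewrite ler1n.
apply: (half_lt_of_split _ sum_gt _ _ (expectation_many_add_few X theta)).
- by rewrite mulr_gt0 // ltr0n; case/andP: l_range.
- by apply: expectation_ge0 => t.
- by apply: expectation_ge0 => t.
- exact: expectation_Top_load_ge_many.
- exact: expectation_Top_load_ge_few.
Qed.
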